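(* In $D_n$ the following hold. (1) For all $1\le p<q\le n-1$: $w_q\cdot w_p=w_p\cdot w_q$. (2) For $1\le p<q\le n$ with $p\le n-1$ and $1\le i_q\le q-1$: $$t_{q}^{i_{q}} \cdot w_{p}=\begin{cases} w_{i_{q}} \cdot t_{q}^{i_{q}} & q= p + i_{q}, \\ w_{i_{q}} \cdot w_{p+i_{q}} \cdot t_{q}^{i_{q}} & q > p + i_{q}, \\ w_{p+i_{q}-q} \cdot w_{i_{q}} \cdot t_{q}^{i_{q}} & q < p + i_{q}. \end{cases}$$ (3) For $2\le p<q\le n-1$ and $1\le i_p\le p-1$: $w_q\cdot t_p^{i_p}=w_{i_p}\cdot t_p^{i_p}\cdot w_q$.
   Context: $D_n$ ($n\ge 2$) is the Coxeter group with generators $s_{1'},s_1,\dots,s_{n-1}$ and relations $s^2=1$, $(s_i s_{i+1})^3=1$, $(s_is_j)^2=1$ for $|i-j|\ge 2$, $(s_{1'}s_2)^3=1$, $(s_{1'}s_i)^2=1$ for $i\ne 2$. For $2\le k\le n$, $t_k=s_1s_2\cdots s_{k-1}$; for $1\le k\le n-1$, $w_k=s_k s_{k-1}\cdots s_2 s_1 s_{1'} s_2\cdots s_k$. *)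

From mathcomp Require Import all_boot.
Set Implicit Arguments. Unset Strict Implicit. Unset Printing Implicit Defensive.

(* Generators are encoded as naturals:
   0 stands for s_{1'} and i (1 <= i <= n-1) stands for s_i.  Elements of D_n
   are words (seq nat) modulo the congruence generated by the defining
   relations; since every generator is an involution, this monoid quotient is
   exactly the group given by the presentation. *)

Definition Dgen (n g : nat) : bool := g <= n.-1.

Inductive Dn_relator (n : nat) : seq nat -> Prop :=
| DR_inv g : Dgen n g -> Dn_relator n [:: g; g]
| DR_braid i : 1 <= i -> i.+1 <= n.-1 ->
    Dn_relator n [:: i; i.+1; i; i.+1; i; i.+1]
| DR_comm i j : 1 <= i <= n.-1 -> 1 <= j <= n.-1 -> i.+2 <= j ->
    Dn_relator n [:: i; j; i; j]
| DR_braid' : 2 <= n.-1 -> Dn_relator n [:: 0; 2; 0; 2; 0; 2]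
| DR_comm' i : 1 <= i <= n.-1 -> i != 2 -> Dn_relator n [:: 0; i; 0; i].

Inductive Dn_eq (n : nat) : seq nat -> seq nat -> Prop :=
| De_ax r : Dn_relator n r -> Dn_eq n r [::]
| De_refl u : Dn_eq n u u
| De_sym u v : Dn_eq n u v -> Dn_eq n v u
| De_trans u v w : Dn_eq n u v -> Dn_eq n v w -> Dn_eq n u w
| De_ctx a b u v : Dn_eq n u v -> Dn_eq n (a ++ u ++ b) (a ++ v ++ b).

Definition t_word (k : nat) : seq nat := iota 1 k.-1.
(* w_k = s_k s_{k-1} ... s_1 s_{1'} s_2 ... s_k *)
Definition w_word (k : nat) : seq nat := rev (iota 1 k) ++ 0 :: iota 2 k.-1.
Definition wpow (x : seq nat) (m : nat) : seq nat := flatten (nseq m x).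

From mathcomp Require Import all_boot zify.
From Stdlib Require Import Setoid Morphisms.

(* Conjugation by t_m = s_1 ... s_(m-1) sends s_j to s_(j+1) for 1 <= j <= m-2;
   hence it sends w_k to w_1 w_(k+1) when k + 2 <= m, w_(m-1) to w_1, and, as
   s_q commutes with t_m for q > m, w_q to w_1 w_q when q >= m.  The w_k are
   involutions and pairwise commute (by induction on q from the adjacent case,
   since s_q commutes with w_p for q >= p + 2), so w_1 w_a w_1 = w_a.  With
   these rules, (2) and (3) follow by induction on the exponent. *)

Lemma iota_rcons j m : iota j m.+1 = rcons (iota j m) (j + m).
Proof. by rewrite -cats1 -addn1 iotaD. Qed.

Lemma w_wordS_cat k r : 1 <= k -> w_word k.+1 ++ r = k.+1 :: w_word k ++ k.+1 :: r.
Proof.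
case: k => [//|k] _; rewrite /w_word [iota 1 _]iota_rcons [iota 2 _]iota_rcons.
by rewrite rev_rcons /= -!catA /= cat_rcons add1n add2n.
Qed.

Lemma w_word_letters k : all (leq^~ k) (w_word k).
Proof. by apply/allP => g; rewrite /w_word mem_cat mem_rev in_cons !mem_iota; lia. Qed.

Lemma t_wordS_cat m r : 1 <= m -> t_word m.+1 ++ r = t_word m ++ m :: r.
Proof. by case: m => [//|m] _; rewrite /t_word iota_rcons cat_rcons add1n. Qed.

Lemma wpowS_cat x i r : wpow x i.+1 ++ r = x ++ wpow x i ++ r.
Proof. by rewrite /wpow /= catA. Qed.

Lemma wpow1_cat x r : wpow x 1 ++ r = x ++ r.
Proof. by rewrite /wpow /= cats0. Qed.

#[export] Instance Dn_eq_equiv n : Equivalence (Dn_eq n).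
Proof. split; [exact: De_refl | exact: De_sym | move=> x y z; exact: De_trans]. Qed.

#[export] Instance Dn_eq_cat n : Proper (Dn_eq n ==> Dn_eq n ==> Dn_eq n) (@cat nat).
Proof.
move=> u u' eq_u v v' eq_v; transitivity (u' ++ v); first exact: (De_ctx [::] v eq_u).
by have := De_ctx u' [::] eq_v; rewrite !cats0.
Qed.

#[export] Instance Dn_eq_cons n : Proper (eq ==> Dn_eq n ==> Dn_eq n) (@cons nat).
Proof. by move=> a _ <- u v eq_uv; have := De_ctx [:: a] [::] eq_uv; rewrite !cats0. Qed.

#[export] Hint Resolve De_refl : core.

Section Words.
Variable n : nat.
Local Notation "u ≡ v" := (Dn_eq n u v) (at level 70, no associativity).

(* Identities carry an arbitrary right context r, so that they rewrite
   prefixes of right-nested concatenations. *)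

(* Lets [//] discharge the arithmetic side conditions of the rewrite rules. *)
#[local] Hint Extern 0 (is_true _) => lia : core.

Lemma relator_cancel x r : Dn_relator n x -> x ++ r ≡ r.
Proof. by move=> /De_ax /(De_ctx [::] r). Qed.

Lemma genK g r : g <= n.-1 -> g :: g :: r ≡ r.
Proof. by move=> g_n; apply: relator_cancel (DR_inv g_n). Qed.

Lemma commute_of_relator a b r : a <= n.-1 -> b <= n.-1 ->
  Dn_relator n [:: a; b; a; b] -> b :: a :: r ≡ a :: b :: r.
Proof.
move=> a_n b_n /relator_cancel rel.
transitivity (b :: a :: ([:: a; b; a; b] ++ r)); first by rewrite rel.
by rewrite /= genK // genK.
Qed.

Lemma braid_of_relator a b r : a <= n.-1 -> b <= n.-1 ->
  Dn_relator n [:: a; b; a; b; a; b] -> a :: b :: a :: r ≡ b :: a :: b :: r.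
Proof.
move=> a_n b_n /relator_cancel rel.
transitivity ([:: a; b; a; b; a; b] ++ b :: a :: b :: r); last by rewrite rel.
by rewrite /= [in X in _ ≡ X]genK // genK // genK.
Qed.

Lemma braid_gens i r : 1 <= i -> i.+1 <= n.-1 ->
  i :: i.+1 :: i :: r ≡ i.+1 :: i :: i.+1 :: r.
Proof. by move=> i_gt0 i_n; apply: braid_of_relator => //; apply: DR_braid. Qed.

Lemma braid_gens0 r : 2 <= n.-1 -> 0 :: 2 :: 0 :: r ≡ 2 :: 0 :: 2 :: r.
Proof. by move=> n_gt2; apply: braid_of_relator => //; apply: DR_braid'. Qed.

Definition gen_commute a b := [|| a == b,
  [&& 0 < a, a <= n.-1, 0 < b, b <= n.-1 & (a.+2 <= b) || (b.+2 <= a)],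
  [&& a == 0, 0 < b, b <= n.-1 & b != 2] | [&& b == 0, 0 < a, a <= n.-1 & a != 2]].

Lemma commute_gens a b r : gen_commute a b -> a :: b :: r ≡ b :: a :: r.
Proof.
case/or4P=> [/eqP-> // | /and5P[a_gt0 a_n b_gt0 b_n /orP[ab | ba]] | | ].
- by symmetry; apply: commute_of_relator => //; apply: DR_comm.
- by apply: commute_of_relator => //; apply: DR_comm.
- by case/and4P=> /eqP-> *; symmetry; apply: commute_of_relator => //; apply: DR_comm'.
- by case/and4P=> /eqP-> *; apply: commute_of_relator => //; apply: DR_comm'.
Qed.

Lemma commute_word a u r : all (gen_commute a) u -> a :: u ++ r ≡ u ++ a :: r.
Proof.
elim: u => [|b u IHu] //= /andP[ab au].
by rewrite commute_gens // IHu.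
Qed.

Lemma commute_iota a j m r : (forall g, j <= g < j + m -> gen_commute a g) ->
  a :: iota j m ++ r ≡ iota j m ++ a :: r.
Proof. by move=> ga; apply/commute_word/allP => g; rewrite mem_iota; apply: ga. Qed.

Lemma word_revK u r : all (leq^~ n.-1) u -> u ++ rev u ++ r ≡ r.
Proof.
elim: u r => [|a u IHu] r //= /andP[a_n u_n].
by rewrite rev_cons cat_rcons IHu // genK.
Qed.

Lemma w_word_commute_gen k j r : 1 <= k -> k.+2 <= j <= n.-1 ->
  j :: w_word k ++ r ≡ w_word k ++ j :: r.
Proof.
move=> k_gt0 j_range; apply/commute_word/(sub_all _ (w_word_letters k)) => g.
by rewrite /gen_commute; lia.
Qed.

Lemma w_wordK k r : 1 <= k <= n.-1 -> w_word k ++ w_word k ++ r ≡ r.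
Proof.
case: k => [//|k]; elim: k r => [|k IHk] r k_range.
  by rewrite /= commute_gens ?genK //; rewrite /gen_commute; lia.
by rewrite !(w_wordS_cat k.+1) // genK // IHk // genK.
Qed.

Lemma w_wordSS k r : 1 <= k -> k.+2 <= n.-1 ->
  w_word k.+2 ++ r ≡ k.+1 :: k.+2 :: w_word k.+1 ++ k.+2 :: k.+1 :: r.
Proof.
move=> k_gt0 k_n; rewrite !w_wordS_cat // !(braid_gens k.+1) //.
by rewrite (w_word_commute_gen k k.+2) // genK.
Qed.

Lemma w_word_commuteS k r : 1 <= k -> k.+1 <= n.-1 ->
  w_word k.+1 ++ w_word k ++ r ≡ w_word k ++ w_word k.+1 ++ r.
Proof.
case: k => [//|k] _; elim: k r => [|k IHk] r k_n.
  have gc01 : gen_commute 1 0 by rewrite /gen_commute; lia.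
  have gc10 : gen_commute 0 1 by rewrite /gen_commute; lia.
  rewrite /w_word /= (commute_gens 1 0 r) // braid_gens0 //.
  rewrite -(braid_gens 1 [:: 0, 2, 1 & r]) // (commute_gens 1 0 [:: 2, 1 & r]) //.
  by rewrite (braid_gens 1) // -(braid_gens0 [:: 1, 2 & r]) // (commute_gens 0 1 [:: 2 & r]).
transitivity (k.+2 :: k.+3 :: w_word k.+1 ++ w_word k.+2 ++ k.+3 :: k.+2 :: r).
  rewrite (w_wordSS k.+1) // -IHk // [w_word k.+2 ++ r]w_wordS_cat // genK //.
  by rewrite (w_word_commute_gen k.+1 k.+3).
rewrite (w_wordSS k.+1) // [in X in _ ≡ X]w_wordS_cat // genK //.
by rewrite (w_word_commute_gen k.+1 k.+3).
Qed.

Lemma w_word_commute p q r : 1 <= p < q -> q <= n.-1 ->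
  w_word q ++ w_word p ++ r ≡ w_word p ++ w_word q ++ r.
Proof.
elim: q r => [|q IHq] r p_range q_n; first lia.
have [p_lt_q | ->] : p < q \/ p = q by lia.
  rewrite w_wordS_cat // (w_word_commute_gen p q.+1) // IHq //.
  by rewrite (w_word_commute_gen p q.+1) // -w_wordS_cat.
exact: w_word_commuteS.
Qed.

Lemma w_word_conj1 a r : 1 <= a <= n.-1 ->
  w_word 1 ++ w_word a ++ w_word 1 ++ r ≡ w_word a ++ r.
Proof.
move=> a_range; have [-> | a_gt1] : a = 1 \/ 1 < a by lia.
  exact: w_wordK.
by rewrite -(w_word_commute 1) // w_wordK.
Qed.

Lemma t_word_shift m j r : 1 <= j -> j.+2 <= m <= n ->
  t_word m ++ j :: r ≡ j.+1 :: t_word m ++ r.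
Proof.
move=> j_gt0 m_range.
have -> : t_word m = iota 1 j.-1 ++ j :: j.+1 :: iota j.+2 (m - j.+2).
  rewrite /t_word (_ : m.-1 = j.-1 + (m - j.+2).+2); last lia.
  by rewrite iotaD /=; congr (_ ++ _ :: _ :: iota _ _); lia.
rewrite -!catA /= -(commute_iota j j.+2); last by move=> g; rewrite /gen_commute; lia.
rewrite braid_gens // -(commute_iota j.+1 1) //.
by move=> g; rewrite /gen_commute; lia.
Qed.

Lemma t_word_w_pred m r : 2 <= m <= n ->
  t_word m ++ w_word m.-1 ++ r ≡ w_word 1 ++ t_word m ++ r.
Proof.
move=> m_range; rewrite /t_word /w_word -catA word_revK; last first.
  by apply/allP=> g; rewrite mem_iota; lia.
case: m m_range => [|[|m]] // m_range /=.
by rewrite (commute_gens 1 0) ?genK //; rewrite /gen_commute; lia.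
Qed.

Lemma t_word_w1 m r : 3 <= m <= n ->
  t_word m ++ w_word 1 ++ r ≡ w_word 1 ++ w_word 2 ++ t_word m ++ r.
Proof.
move=> m_range; have -> : t_word m = 1 :: 2 :: iota 3 (m - 3).
  by rewrite /t_word (_ : m.-1 = (m - 3).+2) //; lia.
have gc01 : gen_commute 0 1 by rewrite /gen_commute; lia.
rewrite /= -(commute_iota 1 3); last by move=> g; rewrite /gen_commute; lia.
rewrite -(commute_iota 0 3); last by move=> g; rewrite /gen_commute; lia.
rewrite /w_word /= -(braid_gens 1) // (commute_gens 0 1) // (genK 1) //.
by rewrite braid_gens0 // (genK 2) // (commute_gens 0 1).
Qed.

Lemma t_word_w k m r : 1 <= k -> k.+2 <= m <= n ->
  t_word m ++ w_word k ++ r ≡ w_word 1 ++ w_word k.+1 ++ t_word m ++ r.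
Proof.
case: k => [//|k] _; elim: k r => [|k IHk] r m_range; first exact: t_word_w1.
rewrite (w_wordS_cat k.+1) // t_word_shift // IHk // t_word_shift //.
by rewrite (w_word_commute_gen 1 k.+3) // -w_wordS_cat.
Qed.

Lemma t_word_w_ge p q r : 2 <= p <= q -> q <= n.-1 ->
  t_word p ++ w_word q ++ r ≡ w_word 1 ++ w_word q ++ t_word p ++ r.
Proof.
elim: q r => [|q IHq] r p_range q_n; first lia.
have [p_le_q | ->] : p <= q \/ p = q.+1 by lia.
  have t_comm : all (gen_commute q.+1) (t_word p).
    by apply/allP=> g; rewrite /t_word mem_iota /gen_commute; lia.
  rewrite (w_wordS_cat q) // -(commute_word q.+1 (t_word p)) // IHq //.
  rewrite (w_word_commute_gen 1 q.+1) // -(commute_word q.+1 (t_word p)) //.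
  by rewrite -w_wordS_cat.
rewrite (w_wordS_cat q) // -t_wordS_cat // t_word_w // (t_wordS_cat q.+1) //.
by rewrite genK.
Qed.

Lemma tpow_w_ge p q i r : 2 <= p <= q -> q <= n.-1 -> 1 <= i < p ->
  wpow (t_word p) i ++ w_word q ++ r ≡ w_word i ++ w_word q ++ wpow (t_word p) i ++ r.
Proof.
move=> p_range q_n; case: i => [//|i]; elim: i r => [|i IHi] r i_range.
  by rewrite !wpow1_cat t_word_w_ge.
rewrite !(wpowS_cat _ i.+1) IHi // t_word_w // t_word_w_ge //.
by rewrite w_word_conj1.
Qed.

Definition w_prefix p q i :=
  if q == p + i then w_word i
  else if p + i < q then w_word i ++ w_word (p + i)
  else w_word (p + i - q) ++ w_word i.

Lemma w_prefix_eq p q i : q = p + i -> w_prefix p q i = w_word i.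
Proof. by move=> ->; rewrite /w_prefix eqxx. Qed.

Lemma w_prefix_lt p q i : p + i < q -> w_prefix p q i = w_word i ++ w_word (p + i).
Proof. by move=> lt_q; rewrite /w_prefix lt_q gtn_eqF. Qed.

Lemma w_prefix_gt p q i : q < p + i -> w_prefix p q i = w_word (p + i - q) ++ w_word i.
Proof. by move=> gt_q; rewrite /w_prefix ltn_eqF // ltnNge ltnW. Qed.

Lemma t_word_w_prefix p q i r : 1 <= p < q -> q <= n -> 1 <= i -> i.+2 <= q ->
  t_word q ++ w_prefix p q i ++ r ≡ w_prefix p q i.+1 ++ t_word q ++ r.
Proof.
move=> p_range q_n i_gt0 i_q.
have [lt_q | [eq_q | gt_q]] : p + i < q \/ p + i = q \/ q < p + i by lia.
- rewrite w_prefix_lt // -catA t_word_w //.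
  have [eq_q | lt_q'] : p + i.+1 = q \/ p + i.+1 < q by lia.
    by rewrite w_prefix_eq // -eq_q addnS t_word_w_pred // w_word_conj1.
  by rewrite w_prefix_lt // t_word_w // w_word_conj1 // -catA addnS.
- rewrite w_prefix_eq // w_prefix_gt // t_word_w // -catA.
  by rewrite (_ : p + i.+1 - q = 1) //; lia.
- rewrite !w_prefix_gt // -!(catA (w_word _)) t_word_w // t_word_w // w_word_conj1 //.
  by rewrite addnS subSn //; lia.
Qed.

Lemma tpow_w p q i r : 1 <= p < q -> q <= n -> 1 <= i < q ->
  wpow (t_word q) i ++ w_word p ++ r ≡ w_prefix p q i ++ wpow (t_word q) i ++ r.
Proof.
move=> p_range q_n; case: i => [//|i]; elim: i r => [|i IHi] r i_range.
  rewrite !wpow1_cat; have [eq_q | lt_q] : p.+1 = q \/ p.+1 < q by lia.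
    by rewrite w_prefix_eq ?addn1 // -eq_q t_word_w_pred.
  by rewrite w_prefix_lt ?addn1 // -catA t_word_w.
by rewrite !(wpowS_cat _ i.+1) IHi // t_word_w_prefix.
Qed.

End Words.

Theorem mainTheorem5 (n : nat) (hn : 2 <= n) :
  (forall p q, 1 <= p -> p < q -> q <= n.-1 ->
     Dn_eq n (w_word q ++ w_word p) (w_word p ++ w_word q)) /\
  (forall p q i, 1 <= p -> p < q -> q <= n -> p <= n.-1 -> 1 <= i <= q.-1 ->
     Dn_eq n (wpow (t_word q) i ++ w_word p)
       (if q == p + i then w_word i ++ wpow (t_word q) i
        else if p + i < q then w_word i ++ w_word (p + i) ++ wpow (t_word q) i
        else w_word (p + i - q) ++ w_word i ++ wpow (t_word q) i)) /\
  (forall p q i, 2 <= p -> p < q -> q <= n.-1 -> 1 <= i <= p.-1 ->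
     Dn_eq n (w_word q ++ wpow (t_word p) i)
       (w_word i ++ wpow (t_word p) i ++ w_word q)).
Proof.
split; [|split].
- move=> p q p_gt0 p_lt_q q_n.
  by have := w_word_commute n p q [::]; rewrite !cats0; apply; lia.
- move=> p q i p_gt0 p_lt_q q_n _ i_range.
  have := tpow_w n p q i [::]; rewrite !cats0 /w_prefix => -> //; try lia.
  by case: ifP => _; [|case: ifP => _]; rewrite -?catA.
- move=> p q i p_gt1 p_lt_q q_n i_range.
  have := tpow_w_ge n p q i [::]; rewrite !cats0 => -> //; try lia.
  by rewrite w_wordK //; lia.
Qed.
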